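(* Let $q$ be a prime power. Let $C_1=[n,k_1,d_1]_q$ and $C_2=[n,k_2,d_2]_q$ be linear codes over $\mathbb{F}_q$ with $C_2\subset C_1$ (giving, via the CSS construction, an AQECC $[[n,k,d_z/d_x]]_q$, $k=k_1-k_2$), and let $C_3=[n^{*},k_3,d_3]_q$ and $C_4=[n^{*},k_4,d_4]_q$ be linear codes over $\mathbb{F}_q$ with $C_4\subset C_3$ (giving an AQECC $[[n^{*},k^{*},d_z^{*}/d_x^{*}]]_q$, $k^{*}=k_3-k_4$). Let $d_2^{\perp}$ and $d_4^{\perp}$ be the minimum distances of the Euclidean duals $C_2^{\perp}$ and $C_4^{\perp}$. Then there exists an AQECC with parameters $[[n+n^{*}, k+k^{*}, d_z^{\diamond}/d_x^{\diamond}]]_q=[[n+n^{*},(k_1+k_3)-(k_2+k_4), d_z^{\diamond}/d_x^{\diamond}]]_q$, where $d_z^{\diamond}\geq\min\{d_1,d_3\}$ and $d_x^{\diamond}\geq\min\{d_2^{\perp},d_4^{\perp}\}$.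
   Context: An AQECC $[[n,k,d_z/d_x]]_q$ is a $q^k$-dimensional subspace of $\mathbb{C}^{q^n}$ correcting all qudit-flip errors up to $\lfloor (d_x-1)/2\rfloor$ and all phase-shift errors up to $\lfloor (d_z-1)/2\rfloor$. CSS construction: if $C_2\subset C_1\subseteq\mathbb{F}_q^n$ are linear of dimensions $k_2<k_1$, there is an AQECC $[[n,k_1-k_2,d_z/d_x]]_q$ with $d_z=\mathrm{wt}(C_1\setminus C_2)$, $d_x=\mathrm{wt}(C_2^{\perp}\setminus C_1^{\perp})$; such a code is said to be derived from $C_1,C_2$. *)

(* Linear codes over a finite field F (q = #|F|, automatically a
   prime power) are subspaces {vspace 'rV[F]_n} of F^n. *)
From HB Require Import structures.
From mathcomp Require Import all_boot all_order all_algebra all_field.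
Set Implicit Arguments. Unset Strict Implicit. Unset Printing Implicit Defensive.
Import GRing.Theory.
Local Open Scope ring_scope.

Section Codes.
Variable F : finFieldType.

Definition wt n (x : 'rV[F]_n) : nat := #|[set i : 'I_n | x 0 i != 0]|.

(* wt(S) = minimum weight of the elements of a set S (n.+1 plays the role of
   +infinity when S is empty). *)
Definition minwt n (S : {set 'rV[F]_n}) : nat :=
  \big[minn/n.+1]_(x in S) wt x.

Definition vset n (C : {vspace 'rV[F]_n}) : {set 'rV[F]_n} := [set x | x \in C].

Definition edual n (C : {vspace 'rV[F]_n}) : {set 'rV[F]_n} :=
  [set y : 'rV[F]_n | [forall x : 'rV[F]_n, (x \in C) ==> (\sum_i x 0 i * y 0 i == 0)]].

Definition mindist n (S : {set 'rV[F]_n}) : nat := minwt (S :\ 0).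

Definition CSS_derived n (C1 C2 : {vspace 'rV[F]_n}) (k dz dx : nat) : Prop :=
  [/\ (C2 <= C1)%VS, C2 != C1,
      k = (\dim C1 - \dim C2)%N,
      dz = minwt (vset C1 :\: vset C2)
    & dx = minwt (edual C2 :\: edual C1)].

Definition AQECC n (k dz dx : nat) : Prop :=
  exists C1 C2 : {vspace 'rV[F]_n}, CSS_derived C1 C2 k dz dx.

End Codes.

From HB Require Import structures.
From mathcomp Require Import all_boot all_order all_algebra all_field.
Set Implicit Arguments. Unset Strict Implicit. Unset Printing Implicit Defensive.
Import GRing.Theory.
Local Open Scope ring_scope.

(* Take the direct sums D13 = C1 (+) C3 and D24 = C2 (+) C4 inside F^(n+ns);
   then D24 is a proper subcode of D13 of codimension (k1 - k2) + (k3 - k4).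
   A nonzero word of D13 has a nonzero half lying in C1 or C3, so its weight is
   at least min(d1, d3). Dually, the halves of a word orthogonal to D24 are
   orthogonal to C2 and C4 respectively, so a nonzero such word weighs at least
   min(d2^perp, d4^perp). Both CSS distances of (D13, D24) are minima over sets
   of such nonzero words. *)

Section Weights.
Variable F : finFieldType.

Lemma wt_leq n (x : 'rV[F]_n) : (wt x <= n)%N.
Proof. by rewrite /wt -[leqRHS]card_ord max_card. Qed.

Lemma minwt_leq n (S : {set 'rV[F]_n}) x : x \in S -> (minwt S <= wt x)%N.
Proof.
rewrite /minwt -big_filter => xS.
have : x \in [seq y <- index_enum 'rV[F]_n | y \in S] by rewrite mem_filter xS mem_index_enum.
elim: [seq _ <- _ | _] => //= y r IHr; rewrite inE big_cons => /orP[/eqP<-|/IHr].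
  exact: geq_minl.
by rewrite geq_min => ->; rewrite orbT.
Qed.

Lemma minwt_geq n (S : {set 'rV[F]_n}) m :
  (m <= n.+1)%N -> (forall x, x \in S -> m <= wt x)%N -> (m <= minwt S)%N.
Proof. by move=> mn Sm; rewrite /minwt; elim/big_ind: _ => // a b; rewrite leq_min => ->. Qed.

Lemma minwt_leq_succ n (S : {set 'rV[F]_n}) : (minwt S <= n.+1)%N.
Proof.
rewrite /minwt; elim/big_ind: _ => // [a b|x _]; first by rewrite geq_min => ->.
exact: leqW (wt_leq x).
Qed.

Lemma mindist_leq n (S : {set 'rV[F]_n}) x :
  x \in S -> x != 0 -> (mindist S <= wt x)%N.
Proof. by move=> xS xn0; apply: minwt_leq; rewrite in_setD1 xn0. Qed.

Lemma wt_row_mxl n m (a : 'rV[F]_n) (b : 'rV[F]_m) : (wt a <= wt (row_mx a b))%N.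
Proof.
rewrite /wt -(card_imset _ (@lshift_inj n m)); apply: subset_leq_card.
by apply/subsetP=> j /imsetP[i]; rewrite !inE => ai ->; rewrite row_mxEl.
Qed.

Lemma wt_row_mxr n m (a : 'rV[F]_n) (b : 'rV[F]_m) : (wt b <= wt (row_mx a b))%N.
Proof.
rewrite /wt -(card_imset _ (@rshift_inj n m)); apply: subset_leq_card.
by apply/subsetP=> j /imsetP[i]; rewrite !inE => bi ->; rewrite row_mxEr.
Qed.

Lemma minn_mindist_leq_wt n m (S : {set 'rV[F]_n}) (S' : {set 'rV[F]_m}) x :
  lsubmx x \in S -> rsubmx x \in S' -> x != 0 ->
  (minn (mindist S) (mindist S') <= wt x)%N.
Proof.
move=> xlS xrS' xn0; rewrite -[x]hsubmxK in xn0 *.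
have [xl0 | xln0] := eqVneq (lsubmx x) 0.
  have xrn0 : rsubmx x != 0 by apply: contraNneq xn0 => ->; rewrite xl0 row_mx0.
  by rewrite geq_min (leq_trans (mindist_leq xrS' xrn0) (wt_row_mxr _ _)) orbT.
by rewrite geq_min (leq_trans (mindist_leq xlS xln0) (wt_row_mxl _ _)).
Qed.

End Weights.

Section DirectSum.
Variables (F : finFieldType) (n m : nat).

Definition lin_lshift : 'Hom('rV[F]_n, 'rV[F]_(n + m)) := linfun (mulmxr (row_mx 1%:M 0)).
Definition lin_rshift : 'Hom('rV[F]_m, 'rV[F]_(n + m)) := linfun (mulmxr (row_mx 0 1%:M)).

Lemma lin_lshiftE a : lin_lshift a = row_mx a 0.
Proof. by rewrite lfunE /= mul_mx_row mulmx1 mulmx0. Qed.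

Lemma lin_rshiftE b : lin_rshift b = row_mx 0 b.
Proof. by rewrite lfunE /= mul_mx_row mulmx1 mulmx0. Qed.

Implicit Types (C : {vspace 'rV[F]_n}) (D : {vspace 'rV[F]_m}).

Definition dsum C D : {vspace 'rV[F]_(n + m)} := (lin_lshift @: C + lin_rshift @: D)%VS.

Lemma row_mx_dsum C D a b : a \in C -> b \in D -> row_mx a b \in dsum C D.
Proof.
move=> aC bC; apply/memv_addP.
exists (lin_lshift a); first exact: memv_img.
exists (lin_rshift b); first exact: memv_img.
by rewrite lin_lshiftE lin_rshiftE add_row_mx add0r addr0.
Qed.

Lemma hsubmx_dsum C D x : x \in dsum C D -> lsubmx x \in C /\ rsubmx x \in D.
Proof.
case/memv_addP=> _ /memv_imgP[a aC ->] [_ /memv_imgP[b bC ->] ->].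
by rewrite lin_lshiftE lin_rshiftE add_row_mx add0r addr0 row_mxKl row_mxKr.
Qed.

Lemma dsumS (C1 C2 : {vspace 'rV[F]_n}) (C3 C4 : {vspace 'rV[F]_m}) :
  (C2 <= C1)%VS -> (C4 <= C3)%VS -> (dsum C2 C4 <= dsum C1 C3)%VS.
Proof. by move=> sC21 sC43; apply: addvS; apply: limgS. Qed.

Lemma dim_dsum C D : \dim (dsum C D) = (\dim C + \dim D)%N.
Proof.
have dim_img p (f : 'Hom('rV[F]_p, 'rV[F]_(n + m))) (U : {vspace 'rV_p}) :
    injective f -> \dim (f @: U) = \dim U.
  by move=> /lker0P/eqP f_inj; rewrite limg_dim_eq // f_inj capv0.
rewrite dimv_disjoint_sum.
  rewrite !dim_img // => a b; first by rewrite !lin_rshiftE => /eq_row_mx[].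
  by rewrite !lin_lshiftE => /eq_row_mx[].
apply/eqP; rewrite -subv0; apply/subvP=> x /memv_capP[/memv_imgP[a _ ->]].
case/memv_imgP=> b _; rewrite lin_lshiftE lin_rshiftE => /eq_row_mx[-> _].
by rewrite row_mx0 mem0v.
Qed.

Lemma dot_row_mx (a c : 'rV[F]_n) (b d : 'rV[F]_m) :
  \sum_i row_mx a b 0 i * row_mx c d 0 i =
  \sum_i a 0 i * c 0 i + \sum_i b 0 i * d 0 i.
Proof.
rewrite big_split_ord /=.
by congr (_ + _); apply: eq_bigr => i _; rewrite ?row_mxEl ?row_mxEr.
Qed.

Lemma hsubmx_edual_dsum C D y :
  y \in edual (dsum C D) -> lsubmx y \in edual C /\ rsubmx y \in edual D.
Proof.
have dot0 p (u : 'rV[F]_p) : \sum_i (0 : 'rV[F]_p) 0 i * u 0 i = 0.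
  by rewrite big1 // => i _; rewrite mxE mul0r.
rewrite inE -{1}[y]hsubmxK => /forallP y_orth.
split; rewrite inE; apply/forallP=> x; apply/implyP=> xC.
  have := implyP (y_orth (row_mx x 0)) (row_mx_dsum xC (mem0v D)).
  by rewrite dot_row_mx dot0 addr0.
have := implyP (y_orth (row_mx 0 x)) (row_mx_dsum (mem0v C) xC).
by rewrite dot_row_mx dot0 add0r.
Qed.

End DirectSum.

Lemma mem0_edual (F : finFieldType) n (C : {vspace 'rV[F]_n}) : 0 \in edual C.
Proof.
rewrite inE; apply/forallP=> x; apply/implyP=> _.
by rewrite big1 // => i _; rewrite mxE mulr0.
Qed.

Lemma dimv_ltn (K : fieldType) (vT : vectType K) (U V : {vspace vT}) :
  (U <= V)%VS -> U != V -> (\dim U < \dim V)%N.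
Proof. by move=> sUV; rewrite (ltn_leqif (dimv_leqif_eq sUV)). Qed.

Theorem theorem4 (F : finFieldType) (n ns : nat)
    (C1 C2 : {vspace 'rV[F]_n}) (C3 C4 : {vspace 'rV[F]_ns}) :
  (C2 <= C1)%VS -> C2 != C1 ->
  (C4 <= C3)%VS -> C4 != C3 ->
  exists dz dx : nat,
    AQECC F (n + ns) ((\dim C1 + \dim C3) - (\dim C2 + \dim C4))%N dz dx /\
    (minn (mindist (vset C1)) (mindist (vset C3)) <= dz)%N /\
    (minn (mindist (edual C2)) (mindist (edual C4)) <= dx)%N.
Proof.
move=> sC21 nC21 sC43 nC43.
set D13 := dsum C1 C3; set D24 := dsum C2 C4.
have minn_leq a (S : {set 'rV[F]_ns}) : (minn a (mindist S) <= (n + ns).+1)%N.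
  by rewrite geq_min (leq_trans (minwt_leq_succ _)) ?ltnS ?leq_addl ?orbT.
exists (minwt (vset D13 :\: vset D24)), (minwt (edual D24 :\: edual D13)).
split; [|split].
- exists D13, D24; split; rewrite ?dim_dsum ?dsumS //.
  apply/eqP => eqD; have := leq_add (dimv_ltn sC21 nC21) (dimv_ltn sC43 nC43).
  by rewrite addSn addnS -!dim_dsum -/D13 -/D24 eqD => /ltnW; rewrite ltnn.
- apply: minwt_geq => // x; rewrite !inE => /andP[xD24 xD13].
  have [xlC1 xrC3] := hsubmx_dsum xD13.
  by apply: minn_mindist_leq_wt; rewrite ?inE //; apply: contraNneq xD24 => ->; apply: mem0v.
- apply: minwt_geq => // y; rewrite !inE => /andP[yD13 yD24].
  have [ylC2 yrC4] : lsubmx y \in edual C2 /\ rsubmx y \in edual C4.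
    by apply: hsubmx_edual_dsum; rewrite inE.
  apply: minn_mindist_leq_wt => //; apply: contraNneq yD13 => ->.
  by have := mem0_edual D13; rewrite inE.
Qed.
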